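(* Let $n\ge 1$ and let $\mathcal{Z}=\{(\boldsymbol{z}_i,y_i)\}_{i=1}^{n}$ be a finite set of labeled representations with $\boldsymbol{z}_i\in\mathbb{R}^{d}$, $\|\boldsymbol{z}_i\|_2=1$ for all $i$, and labels $y_i\in\{1,\dots,N_C\}$, every one of the $N_C$ classes being nonempty. For each class $j$ let $\mathcal{C}_j=\{\boldsymbol{z}_i : y_i=j\}$ and let the prototype be $\boldsymbol{c}_j=\frac{1}{|\mathcal{C}_j|}\sum_{\boldsymbol{z}\in\mathcal{C}_j}\boldsymbol{z}$. Let the similarity measure $d(\cdot,\cdot)$ be the cosine similarity, and consider the nearest centroid classifier loss \[ \mathcal{L}(\theta)=-\frac{1}{n}\sum_{i=1}^{n}\log\frac{e^{d(\boldsymbol{z}_i,\boldsymbol{c}_{y_i})}}{\sum_{j=1}^{N_C}e^{d(\boldsymbol{z}_i,\boldsymbol{c}_j)}}. \] Then \[ \mathcal{L}(\theta)\ \ge\ -\frac{1}{n}\sum_{i=1}^{n}\boldsymbol{z}_i^{\top}\boldsymbol{c}_{y_i}+\frac{\alpha}{n}\sum_{i=1}^{n}\sum_{\boldsymbol{z}'\in\mathcal{Z}}\boldsymbol{z}_i^{\top}\boldsymbol{z}', \] where $\boldsymbol{z}'$ ranges over (an independent copy of) the representations in $\mathcal{Z}$, and $\alpha$ is any constant satisfying $0\le\alpha<\frac{1}{N_C|\mathcal{C}_j|}$ for all $j$.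
   Context: The representations $\boldsymbol{z}_i$ are obtained as $\boldsymbol{z}_i=h_\theta(f_{\phi^*}(\boldsymbol{x}_i))$ from a frozen backbone $f_{\phi^*}$ and a trainable head $h_\theta$ with parameters $\theta$; the loss is viewed as a function of $\theta$. In the bound, $\boldsymbol{c}_{y_i}$ denotes the prototype of the class of sample $i$. *)

From HB Require Import structures.
From mathcomp Require Import all_boot all_order all_algebra.
From mathcomp Require Import all_classical all_reals all_analysis.
Set Implicit Arguments. Unset Strict Implicit. Unset Printing Implicit Defensive.
Import Order.TTheory GRing.Theory Num.Theory.
Local Open Scope ring_scope.

Definition dotp (R : realType) (d : nat) (u v : 'rV[R]_d) : R :=
  \sum_(k < d) u 0 k * v 0 k.

Definition norm2 (R : realType) (d : nat) (u : 'rV[R]_d) : R :=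
  Num.sqrt (dotp u u).

(* Cosine similarity; by MathComp's convention x / 0 = 0, it is 0 when a
   vector is zero. *)
Definition cos_sim (R : realType) (d : nat) (u v : 'rV[R]_d) : R :=
  dotp u v / (norm2 u * norm2 v).

Definition class_idx (n NC : nat) (y : 'I_n -> 'I_NC) (j : 'I_NC) : {set 'I_n} :=
  [set i | y i == j].

Definition prototype (R : realType) (d n NC : nat) (z : 'I_n -> 'rV[R]_d)
  (y : 'I_n -> 'I_NC) (j : 'I_NC) : 'rV[R]_d :=
  (#|class_idx y j|%:R)^-1 *: \sum_(i < n | y i == j) z i.

Definition ncc_loss (R : realType) (d n NC : nat) (z : 'I_n -> 'rV[R]_d)
  (y : 'I_n -> 'I_NC) : R :=
  - (n%:R)^-1 * \sum_(i < n)
      ln (expR (cos_sim (z i) (prototype z y (y i))) /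
          \sum_(j < NC) expR (cos_sim (z i) (prototype z y j))).

(* The loss is nonnegative, since each softmax ratio lies in (0, 1], while the
   right-hand side is nonpositive.  Indeed, writing S_j for the sum of the
   representations of class j, the Cauchy-Schwarz inequality over the N_C
   classes and the bound on alpha give
     alpha |sum_i z_i|^2 <= alpha N_C sum_j |S_j|^2 <= sum_j |S_j|^2 / |C_j|
                          = sum_i z_i^T c_(y_i). *)
From mathcomp Require Import all_boot all_order all_algebra.
From mathcomp Require Import all_classical all_reals all_analysis.
From mathcomp Require Import ring lra.
Set Implicit Arguments. Unset Strict Implicit. Unset Printing Implicit Defensive.
Import Order.TTheory GRing.Theory Num.Theory.
Local Open Scope ring_scope.

Lemma sqr_sum_le_card_sum_sqr (R : realFieldType) (m : nat) (a : 'I_m -> R) :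
  (\sum_(j < m) a j) ^+ 2 <= m%:R * \sum_(j < m) a j ^+ 2.
Proof.
have sum_sqr_diff_ge0 : 0 <= \sum_(j < m) \sum_(l < m) (a j - a l) ^+ 2.
  by apply: sumr_ge0 => j _; apply: sumr_ge0 => l _; apply: sqr_ge0.
have expand_sqr_diff : \sum_(j < m) \sum_(l < m) (a j - a l) ^+ 2 =
    \sum_(j < m) \sum_(l < m) a j ^+ 2 + \sum_(j < m) \sum_(l < m) a l ^+ 2
    - 2%:R * \sum_(j < m) \sum_(l < m) a j * a l.
  rewrite mulr_sumr -big_split -sumrB /=; apply: eq_bigr => j _.
  rewrite mulr_sumr -big_split -sumrB /=; apply: eq_bigr => l _.
  by ring.
have sum_prod : \sum_(j < m) \sum_(l < m) a j * a l = (\sum_(j < m) a j) ^+ 2.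
  by rewrite expr2 mulr_suml; apply: eq_bigr => j _; rewrite mulr_sumr.
have row_sums : \sum_(j < m) \sum_(l < m) a j ^+ 2 = m%:R * \sum_(j < m) a j ^+ 2.
  by rewrite mulr_sumr; apply: eq_bigr => j _; rewrite sumr_const card_ord mulr_natl.
have col_sums : \sum_(j < m) \sum_(l < m) a l ^+ 2 = m%:R * \sum_(j < m) a j ^+ 2.
  by rewrite sumr_const card_ord mulr_natl.
move: sum_sqr_diff_ge0; rewrite expand_sqr_diff sum_prod row_sums col_sums.
lra.
Qed.

Section ClassMeans.

Variables (R : realFieldType) (n NC : nat) (y : 'I_n -> 'I_NC).

Lemma sum_mul_class_mean (x : 'I_n -> R) :
  \sum_(i < n) x i * ((#|class_idx y (y i)|%:R)^-1 * \sum_(l < n | y l == y i) x l)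
  = \sum_(j < NC) (#|class_idx y j|%:R)^-1 * (\sum_(i < n | y i == j) x i) ^+ 2.
Proof.
rewrite (partition_big y predT) //=; apply: eq_bigr => j _.
rewrite expr2 mulrA mulr_sumr; apply: eq_bigr => i /eqP ->.
exact: mulrC.
Qed.

Lemma sqr_sum_le_sum_mul_class_mean (x : 'I_n -> R) (alpha : R) :
  0 <= alpha ->
  (forall j : 'I_NC, alpha <= (NC%:R * #|class_idx y j|%:R)^-1) ->
  alpha * (\sum_(i < n) x i) ^+ 2 <=
  \sum_(i < n) x i * ((#|class_idx y (y i)|%:R)^-1 * \sum_(l < n | y l == y i) x l).
Proof.
move=> alpha_ge0 alpha_le.
pose s j := \sum_(i < n | y i == j) x i.
have -> : \sum_(i < n) x i = \sum_(j < NC) s j by rewrite (partition_big y predT).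
apply: le_trans (ler_wpM2l alpha_ge0 (sqr_sum_le_card_sum_sqr s)) _.
rewrite sum_mul_class_mean mulrA mulr_sumr; apply: ler_sum => j _.
have NC_gt0 : (0 < NC%:R :> R) by rewrite ltr0n (leq_ltn_trans _ (ltn_ord j)).
have alpha_NC_le : alpha * NC%:R <= (#|class_idx y j|%:R)^-1.
  by rewrite mulrC -ler_pdivlMl // -invfM.
by rewrite ler_wpM2r ?sqr_ge0.
Qed.

End ClassMeans.

Lemma sum_dotp_pairs (R : realType) (d n : nat) (z : 'I_n -> 'rV[R]_d) :
  \sum_(i < n) \sum_(k < n) dotp (z i) (z k) = \sum_(c < d) (\sum_(i < n) z i 0 c) ^+ 2.
Proof.
symmetry; under eq_bigr => c _ do rewrite expr2 mulr_suml.
under eq_bigr => c _ do under eq_bigr => i _ do rewrite mulr_sumr.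
by rewrite exchange_big; apply: eq_bigr => i _; rewrite exchange_big.
Qed.

Lemma sum_dotp_prototype (R : realType) (d n NC : nat) (z : 'I_n -> 'rV[R]_d)
    (y : 'I_n -> 'I_NC) :
  \sum_(i < n) dotp (z i) (prototype z y (y i)) =
  \sum_(c < d) \sum_(i < n)
    z i 0 c * ((#|class_idx y (y i)|%:R)^-1 * \sum_(l < n | y l == y i) z l 0 c).
Proof.
rewrite /dotp exchange_big; apply: eq_bigr => c _; apply: eq_bigr => i _.
by rewrite /prototype mxE summxE.
Qed.

Lemma sum_dotp_pairs_le_prototype (R : realType) (d n NC : nat)
    (z : 'I_n -> 'rV[R]_d) (y : 'I_n -> 'I_NC) (alpha : R) :
  0 <= alpha ->
  (forall j : 'I_NC, alpha <= (NC%:R * #|class_idx y j|%:R)^-1) ->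
  alpha * \sum_(i < n) \sum_(k < n) dotp (z i) (z k) <=
  \sum_(i < n) dotp (z i) (prototype z y (y i)).
Proof.
move=> alpha_ge0 alpha_le.
rewrite sum_dotp_pairs sum_dotp_prototype mulr_sumr.
by apply: ler_sum => c _; apply: sqr_sum_le_sum_mul_class_mean.
Qed.

Lemma ncc_loss_ge0 (R : realType) (d n NC : nat) (z : 'I_n -> 'rV[R]_d)
    (y : 'I_n -> 'I_NC) :
  0 <= ncc_loss z y.
Proof.
rewrite /ncc_loss mulNr -mulrN mulr_ge0 ?invr_ge0 ?ler0n // oppr_ge0.
apply: sumr_le0 => i _; apply: ln_le0.
have own_le_sum : expR (cos_sim (z i) (prototype z y (y i))) <=
                  \sum_(j < NC) expR (cos_sim (z i) (prototype z y j)).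
  by rewrite (bigD1 (y i)) //= lerDl sumr_ge0 // => j _; rewrite ltW ?expR_gt0.
by rewrite ler_pdivrMr ?mul1r // (lt_le_trans (expR_gt0 _) own_le_sum).
Qed.

Theorem theorem1 (R : realType) (d n NC : nat) (z : 'I_n -> 'rV[R]_d)
  (y : 'I_n -> 'I_NC) (alpha : R) :
  (0 < n)%N ->
  (forall i, norm2 (z i) = 1) ->
  (forall j : 'I_NC, exists i : 'I_n, y i = j) ->
  0 <= alpha ->
  (forall j : 'I_NC, alpha < (NC%:R * #|class_idx y j|%:R)^-1) ->
  ncc_loss z y >=
    - (n%:R)^-1 * \sum_(i < n) dotp (z i) (prototype z y (y i))
    + alpha / n%:R * \sum_(i < n) \sum_(k < n) dotp (z i) (z k).
Proof.
move=> _ _ _ alpha_ge0 alpha_lt.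
apply: le_trans (ncc_loss_ge0 z y).
have pairs_le := sum_dotp_pairs_le_prototype z alpha_ge0 (fun j => ltW (alpha_lt j)).
rewrite mulrAC [_ * n%:R^-1]mulrC mulNr addrC -mulrBr.
by rewrite mulr_ge0_le0 ?invr_ge0 ?ler0n ?subr_le0.
Qed.
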